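(* Let $W$ be a finite group acting on an affine variety $X$ and let $X/W=\operatorname{Spec}\mathcal{O}(X)^W$. Then $\mathcal{D}(X,X/W)=\mathcal{D}(X)^W$ and $\overline{\mathcal{D}}(X,X/W)=\overline{\mathcal{D}}(X)^W$.
   Context: Varieties are over $\mathbb{C}$ and irreducible. $\mathcal{D}(X)$ is the algebra of ($\mathbb{C}$-linear, Grothendieck) differential operators on $\mathcal{O}(X)$, filtered by order, with associated graded algebra $\overline{\mathcal{D}}(X)$; $W$ acts on both by conjugation. $\mathcal{D}(X,X/W)=\{D\in\mathcal{D}(X): D(\mathcal{O}(X)^W)\subseteq\mathcal{O}(X)^W\}$ with induced filtration $\mathcal{D}(X,X/W)\cap\mathcal{D}(X)_{\le d}$ and associated graded algebra $\overline{\mathcal{D}}(X,X/W)\subseteq\overline{\mathcal{D}}(X)$. *)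

From HB Require Import structures.
From mathcomp Require Import all_boot all_order all_algebra all_fingroup.
From mathcomp Require Import reals.
From mathcomp Require Import complex.
Set Implicit Arguments. Unset Strict Implicit. Unset Printing Implicit Defensive.
Import Order.TTheory GRing.Theory Num.Theory.
Local Open Scope ring_scope.

(* The ground field is C := R[i] for a real field R (realType = complete
   archimedean real closed field, i.e. the real numbers). *)
Notation Cx R := (R[i])%type.

Section DiffOps.
Variables (K : fieldType) (A : comAlgType K).

Definition klinear (D : A -> A) : Prop :=
  forall (c : K) (x y : A), D (c *: x + y) = c *: D x + D y.

Definition comm_mul (D : A -> A) (a : A) : A -> A := fun b => D (a * b) - a * D b.

(* Grothendieck's order filtration: D_{<=0} = End_A(A), and
   D_{<= n+1} = { D C-linear | [D, a] in D_{<= n} for all a in A }. *)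
Fixpoint ord_le (n : nat) (D : A -> A) : Prop :=
  match n with
  | 0 => klinear D /\ forall a b : A, D (a * b) = a * D b
  | n'.+1 => klinear D /\ forall a : A, ord_le n' (comm_mul D a)
  end.

(* D_{<= d-1}, with D_{<= -1} = 0 *)
Definition ord_lt (d : nat) (D : A -> A) : Prop :=
  match d with
  | 0 => forall a, D a = 0
  | d'.+1 => ord_le d' D
  end.

Definition diffop (D : A -> A) : Prop := exists n, ord_le n D.

Definition fsub (D E : A -> A) : A -> A := fun a => D a - E a.

Definition fin_gen_alg : Prop :=
  exists s : seq A, forall P : pred A,
    1 \in P ->
    (forall a b, a \in P -> b \in P -> (a + b \in P) && (a * b \in P)) ->
    (forall (c : K) a, a \in P -> c *: a \in P) ->
    {subset s <= P} -> forall a, a \in P.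

Definition is_domain : Prop :=
  (1 : A) != 0 /\ forall a b : A, a * b = 0 -> a = 0 \/ b = 0.

Definition alg_action (gT : finGroupType) (act : gT -> A -> A) : Prop :=
  (forall a, act 1%g a = a) /\
  (forall g h a, act (g * h)%g a = act g (act h a)) /\
  (forall g, klinear (act g)) /\
  (forall g a b, act g (a * b) = act g a * act g b) /\
  (forall g, act g 1 = 1).

Definition invariant (gT : finGroupType) (act : gT -> A -> A) (a : A) : Prop :=
  forall g, act g a = a.

Definition conj_op (gT : finGroupType) (act : gT -> A -> A) (g : gT) (D : A -> A)
  : A -> A := fun a => act g (D (act g^-1%g a)).

Definition W_inv_op (gT : finGroupType) (act : gT -> A -> A) (D : A -> A) : Prop :=
  diffop D /\ forall g a, conj_op act g D a = D a.

(* D(X, X/W) *)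
Definition preserves_inv (gT : finGroupType) (act : gT -> A -> A) (D : A -> A) : Prop :=
  diffop D /\ forall a, invariant act a -> invariant act (D a).

(* Degree-d homogeneous pieces, for D in D_{<=d}, of the class [D] in
   gr_d D(X) = D_{<=d} / D_{<=d-1}:
   [D] lies in gr_d D(X,X/W) = image of D(X,X/W) cap D_{<=d} *)
Definition gr_in_sub (gT : finGroupType) (act : gT -> A -> A) (d : nat) (D : A -> A)
  : Prop :=
  exists D', preserves_inv act D' /\ ord_le d D' /\ ord_lt d (fsub D D').

(* [D] is fixed by the induced W-action on gr_d D(X) *)
Definition gr_W_inv (gT : finGroupType) (act : gT -> A -> A) (d : nat) (D : A -> A)
  : Prop :=
  forall g, ord_lt d (fsub (conj_op act g D) D).

End DiffOps.

From Pilot Require Import Defs.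
From HB Require Import structures.
From mathcomp Require Import all_boot all_order all_algebra all_fingroup.
From mathcomp Require Import reals complex ring.
Set Implicit Arguments. Unset Strict Implicit. Unset Printing Implicit Defensive.
Import GRing.Theory Num.Theory.
Local Open Scope ring_scope.

(* A differential operator on a domain that kills every W-invariant vanishes.
   For a derivation delta and any b, the orbit polynomial
   p = prod_(c in W b) (X - c) has invariant coefficients and b as a simple
   root, so 0 = delta (p b) = p'(b) delta b with p'(b) <> 0.  In general one
   inducts on the order: if E kills the invariants, so does [E, a] for every
   invariant a, hence [E, a] = 0; and an operator of order <= n + 1 commuting
   with all invariants has order <= n, because for order 1, b |-> F b - b F 1
   is a derivation killing the invariants.  Applied to g.D - D this gives
   D(X, X/W) = D(X)^W.  A W-invariant symbol is the symbol of the Reynolds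
   average |W|^-1 sum_g g.D, which needs |W| invertible in the ground field. *)

Section OperatorSubspaces.
Variables (K : fieldType) (A : comAlgType K).

Record op_subspace (P : (A -> A) -> Prop) : Prop := OpSubspace {
  op_subspace_ext : forall D E, P D -> D =1 E -> P E;
  op_subspace0 : P (fun=> 0);
  op_subspace_lincomb : forall c D E, P D -> P E -> P (fun x => c *: D x + E x)
}.

Section Closure.
Variable P : (A -> A) -> Prop.
Hypothesis subP : op_subspace P.

Lemma op_subspaceZ c (D : A -> A) : P D -> P (fun x => c *: D x).
Proof.
move=> PD; apply: (op_subspace_ext subP (op_subspace_lincomb subP c PD (op_subspace0 subP))).
by move=> x; rewrite addr0.
Qed.

Lemma op_subspaceB (D E : A -> A) : P D -> P E -> P (fsub D E).
Proof.
move=> PD PE; apply: (op_subspace_ext subP (op_subspace_lincomb subP (-1) PE PD)).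
by move=> x; rewrite scaleN1r addrC.
Qed.

Lemma op_subspace_sum I (r : seq I) (Ds : I -> A -> A) :
  (forall i, P (Ds i)) -> P (fun x => \sum_(i <- r) Ds i x).
Proof.
move=> PDs; elim: r => [|i r IHr].
  by apply: (op_subspace_ext subP (op_subspace0 subP)) => x; rewrite big_nil.
apply: (op_subspace_ext subP (op_subspace_lincomb subP 1 (PDs i) IHr)).
by move=> x; rewrite big_cons scale1r.
Qed.

End Closure.

Lemma klinearD (D : A -> A) : klinear D -> {morph D : x y / x + y}.
Proof. by move=> linD x y; rewrite -[x in LHS]scale1r linD scale1r. Qed.

Lemma klinear_op_subspace : op_subspace (@klinear K A).
Proof.
split=> [D E linD eqDE k x y | k x y | c D E linD linE k x y].
- by rewrite -!eqDE linD.
- by rewrite scaler0 addr0.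
- by rewrite linD linE scalerDr !scalerA mulrC -!scalerA scalerDr addrACA.
Qed.

Lemma ord_le_op_subspace n : op_subspace (@ord_le K A n).
Proof.
have [lin_ext lin0 lin_comb] := klinear_op_subspace.
elim: n => [|n [IHext IH0 IHcomb]]; split=> /=.
- move=> D E [linD mulD] eqDE; split=> [|a b]; first exact: lin_ext eqDE.
  by rewrite -!eqDE.
- by split=> // a b; rewrite mulr0.
- move=> c D E [linD mulD] [linE mulE]; split=> [|a b]; first exact: lin_comb.
  by rewrite mulD mulE scalerAr mulrDr.
- move=> D E [linD commD] eqDE; split=> [|a]; first exact: lin_ext eqDE.
  by apply: IHext (commD a) _ => x; rewrite /comm_mul !eqDE.
- split=> // a; apply: IHext IH0 _ => x.
  by rewrite /comm_mul mulr0 subr0.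
- move=> c D E [linD commD] [linE commE]; split=> [|a]; first exact: lin_comb.
  apply: IHext (IHcomb c _ _ (commD a) (commE a)) _ => x.
  by rewrite /comm_mul scalerBr mulrDr -scalerAr opprD addrACA.
Qed.

Lemma ord_lt_op_subspace d : op_subspace (@ord_lt K A d).
Proof.
case: d => [|d]; last exact: ord_le_op_subspace.
split=> //= [D E D0 eqDE x | c D E D0 E0 x]; first by rewrite -eqDE.
by rewrite D0 E0 scaler0 addr0.
Qed.

Lemma comm_mulC (E : A -> A) a b x :
  comm_mul (comm_mul E b) a x = comm_mul (comm_mul E a) b x.
Proof. by rewrite /comm_mul mulrCA; ring. Qed.

Lemma ord_le1_mul (F : A -> A) b x : ord_le 1 F ->
  F (b * x) = b * F x + x * (F b - b * F 1).
Proof.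
case=> _ /(_ b) [_ commF]; have := commF x 1.
by rewrite /comm_mul !mulr1 => <-; rewrite addrC subrK.
Qed.

End OperatorSubspaces.

Section Derivation.
Variables (R : comNzRingType) (delta : R -> R).
Hypotheses (deltaD : {morph delta : x y / x + y})
  (deltaM : forall x y, delta (x * y) = delta x * y + x * delta y).

Lemma derivation0 : delta 0 = 0.
Proof. by apply: (addrI (delta 0)); rewrite -deltaD !addr0. Qed.

Lemma derivation_horner (p : {poly R}) b : (forall i, delta p`_i = 0) ->
  delta p.[b] = p^`().[b] * delta b.
Proof.
elim/poly_ind: p => [|p c IHp] coef0.
  by rewrite deriv0 !horner0 mul0r derivation0.
have delta_c : delta c = 0 by have := coef0 0%N; rewrite coefD coefMX coefC add0r.
have coefp0 i : delta p`_i = 0 by have := coef0 i.+1; rewrite coefD coefMX coefC addr0.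
rewrite hornerMXaddC derivMXaddC hornerD hornerMX deltaD deltaM delta_c IHp //.
by rewrite addr0 mulrDl addrC mulrAC.
Qed.

End Derivation.

Lemma domain_prod_neq0 (K : fieldType) (A : comAlgType K) (I : eqType)
    (r : seq I) (F : I -> A) :
  is_domain A -> (forall i, i \in r -> F i != 0) -> \prod_(i <- r) F i != 0.
Proof.
case=> one_neq0 domA; elim: r => [|i r IHr] Fneq0; first by rewrite big_nil.
rewrite big_cons; apply/eqP => /domA [] /eqP.
- by apply/negP; rewrite Fneq0 ?mem_head.
- by apply/negP; rewrite IHr // => j rj; rewrite Fneq0 // in_cons rj orbT.
Qed.

Section Action.
Variables (K : fieldType) (A : comAlgType K) (gT : finGroupType)
  (act : gT -> A -> A).
Hypothesis actA : alg_action act.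

Lemma act1g a : act 1 a = a. Proof. by case: actA. Qed.
Lemma actMg g h a : act (g * h) a = act g (act h a). Proof. by case: actA => _ []. Qed.
Lemma act_klinear g : klinear (act g). Proof. by case: actA => _ [] _ []. Qed.
Lemma act_mul g a b : act g (a * b) = act g a * act g b.
Proof. by case: actA => _ [] _ [] _ []. Qed.
Lemma act_one g : act g 1 = 1. Proof. by case: actA => _ [] _ [] _ []. Qed.

Definition act_lrmorph (g : gT) : A -> A := act g.
HB.instance Definition _ g :=
  GRing.isLinear.Build K A A *:%R (act_lrmorph g) (act_klinear g).
HB.instance Definition _ g :=
  GRing.isMonoidMorphism.Build A A (act_lrmorph g) (act_one g, act_mul g).

Lemma act0 g : act g 0 = 0. Proof. exact: raddf0 (act_lrmorph g). Qed.
Lemma actD g : {morph act g : a b / a + b}.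
Proof. exact: raddfD (act_lrmorph g). Qed.
Lemma actB g : {morph act g : a b / a - b}.
Proof. exact: raddfB (act_lrmorph g). Qed.
Lemma actZ g c : {morph act g : a / c *: a}.
Proof. exact: (linearZ_LR (act_lrmorph g) c). Qed.
Lemma actK g : cancel (act g^-1) (act g). Proof. by move=> a; rewrite -actMg mulgV act1g. Qed.
Lemma actKV g : cancel (act g) (act g^-1). Proof. by move=> a; rewrite -actMg mulVg act1g. Qed.

Lemma invariant1 : Defs.invariant act 1. Proof. by move=> g; rewrite act_one. Qed.
Lemma invariantM a b : Defs.invariant act a -> Defs.invariant act b ->
  Defs.invariant act (a * b).
Proof. by move=> inv_a inv_b g; rewrite act_mul inv_a inv_b. Qed.

Definition act_orbit (b : A) : seq A := undup (codom (act^~ b)).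

Lemma mem_act_orbit b : b \in act_orbit b.
Proof. by rewrite mem_undup; apply/codomP; exists 1%g; rewrite act1g. Qed.

Lemma act_orbit_perm g b : perm_eq (map (act g) (act_orbit b)) (act_orbit b).
Proof.
rewrite -undup_map_inj; last exact: can_inj (actKV g).
apply: perm_undup => x; apply/mapP/codomP => [[_ /codomP[h ->] ->]|[h ->]].
  by exists (g * h)%g; rewrite actMg.
by exists (act (g^-1 * h)%g b); [apply/codomP; exists (g^-1 * h)%g | rewrite actMg actK].
Qed.

Definition orbit_poly (b : A) : {poly A} := \prod_(c <- act_orbit b) ('X - c%:P).

Lemma orbit_poly_invariant b i : Defs.invariant act (orbit_poly b)`_i.
Proof.
move=> g; rewrite -[act g _]/(act_lrmorph g _) -coef_map rmorph_prod /=.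
under eq_bigr do rewrite map_polyXsubC.
by rewrite -(big_map (act g) xpredT (fun c => 'X - c%:P)) (perm_big _ (act_orbit_perm g b)).
Qed.

Lemma conj_op_klinear g (D : A -> A) : klinear D -> klinear (conj_op act g D).
Proof. by move=> linD c x y; rewrite /conj_op act_klinear linD act_klinear. Qed.

Lemma conj_op_ord_le n g (D : A -> A) : ord_le n D -> ord_le n (conj_op act g D).
Proof.
elim: n D => [|n IHn] D [linD mD]; (split; first exact: conj_op_klinear).
  by move=> a b; rewrite /conj_op act_mul mD act_mul actK.
move=> a; apply: (op_subspace_ext (ord_le_op_subspace A n) (IHn _ (mD (act g^-1 a)))).
by move=> x; rewrite /conj_op /comm_mul actB !act_mul !actK.
Qed.

Lemma conj_op_ord_lt d g (D : A -> A) : ord_lt d D -> ord_lt d (conj_op act g D).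
Proof.
case: d => [|d] /=; last exact: conj_op_ord_le.
by move=> D0 a; rewrite /conj_op D0 act0.
Qed.

Definition reynolds (D : A -> A) : A -> A :=
  fun x => (#|gT|%:R)^-1 *: \sum_(h : gT) conj_op act h D x.

Lemma conj_op_reynolds g (D : A -> A) : conj_op act g (reynolds D) =1 reynolds D.
Proof.
move=> x; rewrite /conj_op /reynolds actZ (big_morph (act g) (actD g) (act0 g)).
congr (_ *: _); rewrite (reindex_inj (mulgI g^-1%g)) /=; apply: eq_bigr => h _.
by rewrite /conj_op invMg invgK !actMg !actK.
Qed.

Lemma reynolds_ord_le n (D : A -> A) : ord_le n D -> ord_le n (reynolds D).
Proof.
move=> ordD; have subsp := ord_le_op_subspace A n.
exact: op_subspaceZ subsp _ _ (op_subspace_sum subsp _ (fun h => conj_op_ord_le h ordD)).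
Qed.

Lemma reynolds_W_inv n (D : A -> A) : ord_le n D -> W_inv_op act (reynolds D).
Proof.
move=> ordD; split; [exists n; exact: reynolds_ord_le | move=> g; exact: conj_op_reynolds].
Qed.

Lemma fsub_reynolds (D : A -> A) : (#|gT|%:R : K) != 0 ->
  fsub D (reynolds D) =1
  (fun x => - (#|gT|%:R)^-1 *: \sum_(h : gT) fsub (conj_op act h D) D x).
Proof.
move=> charW x; rewrite /fsub /reynolds sumrB sumr_const -scaler_nat -/#|gT|.
by rewrite scalerBr !scaleNr opprK scalerA mulVf // scale1r addrC.
Qed.

Definition centralizes_invariants (E : A -> A) : Prop :=
  forall a, Defs.invariant act a -> comm_mul E a =1 (fun=> 0).

Section Domain.
Hypothesis domA : is_domain A.

Lemma orbit_poly_simple_root b :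
  (orbit_poly b).[b] = 0 /\ (orbit_poly b)^`().[b] != 0.
Proof.
pose q := \prod_(c <- rem b (act_orbit b)) ('X - c%:P).
have -> : orbit_poly b = ('X - b%:P) * q.
  by rewrite /orbit_poly (perm_big _ (perm_to_rem (mem_act_orbit b))) big_cons.
rewrite derivM derivXsubC mul1r !hornerE subrr !mul0r addr0; split=> //.
rewrite horner_prod; apply: domain_prod_neq0 => // c c_rem.
rewrite hornerXsubC subr_eq0; apply: contraTneq c_rem => <-.
by rewrite mem_rem_uniqF ?undup_uniq.
Qed.

Lemma derivation_invariant_eq0 (delta : A -> A) :
  {morph delta : x y / x + y} ->
  (forall x y, delta (x * y) = delta x * y + x * delta y) ->
  (forall a, Defs.invariant act a -> delta a = 0) -> delta =1 (fun=> 0).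
Proof.
move=> deltaD deltaM delta_inv b.
have [root_b deriv_b] := orbit_poly_simple_root b.
have := derivation_horner deltaD deltaM b (fun i => delta_inv _ (orbit_poly_invariant b i)).
rewrite root_b (derivation0 deltaD) => /esym.
by case: domA => _ mul_eq0 /mul_eq0 [/eqP|//]; rewrite (negPf deriv_b).
Qed.

Lemma ord_le1_centralizing (F : A -> A) : ord_le 1 F ->
  centralizes_invariants F -> ord_le 0 F.
Proof.
move=> F1 centF; have linF : klinear F := F1.1.
pose delta b := F b - b * F 1.
have delta0 : delta =1 (fun=> 0).
  apply: derivation_invariant_eq0 => // [x y | x y | a inv_a].
  - by rewrite /delta (klinearD linF) mulrDl opprD addrACA.
  - by rewrite /delta (ord_le1_mul _ _ F1); ring.
  - by have := centF a inv_a 1; rewrite /comm_mul mulr1.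
by split=> // b x; rewrite (ord_le1_mul _ _ F1) -/(delta b) delta0 mulr0 addr0.
Qed.

Lemma ord_le_centralizing n (E : A -> A) : ord_le n.+1 E ->
  centralizes_invariants E -> ord_le n E.
Proof.
elim: n E => [|n IHn] E ordE centE; first exact: ord_le1_centralizing.
case: ordE => linE commE; split=> // b; apply: IHn (commE b) _ => a inv_a x.
by rewrite comm_mulC {1}/comm_mul !(centE a inv_a) mulr0 subrr.
Qed.

Lemma ord_le_invariant_eq0 n (E : A -> A) : ord_le n E ->
  (forall a, Defs.invariant act a -> E a = 0) -> E =1 (fun=> 0).
Proof.
elim: n E => [|n IHn] E ordE vanishE x.
  by case: ordE => _ mulE; rewrite -[x]mulr1 mulE vanishE ?mulr0 //; exact: invariant1.
have centE : centralizes_invariants E.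
  move=> a inv_a; apply: IHn (ordE.2 a) _ => b inv_b.
  by rewrite /comm_mul !vanishE ?mulr0 ?subrr //; exact: invariantM.
exact: IHn (ord_le_centralizing ordE centE) vanishE x.
Qed.

Lemma preserves_inv_W_inv (D : A -> A) :
  preserves_inv act D <-> W_inv_op act D.
Proof.
split=> [[[n ordD] presD] | [diffD conjD]].
- split=> [|g a]; first by exists n.
  apply/eqP; rewrite -subr_eq0; apply/eqP; move: a.
  have ord_conjD := op_subspaceB (ord_le_op_subspace A n) (conj_op_ord_le g ordD) ordD.
  apply: (ord_le_invariant_eq0 ord_conjD) => b inv_b.
  by rewrite /fsub /conj_op inv_b presD // subrr.
- split=> // a inv_a g.
  by rewrite -{1}(inv_a g^-1%g) -[act g _]/(conj_op act g D a) conjD.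
Qed.

Lemma gr_in_sub_W_inv d (D : A -> A) : (#|gT|%:R : K) != 0 ->
  ord_le d D -> gr_in_sub act d D <-> gr_W_inv act d D.
Proof.
move=> charW ordD; have subsp := ord_lt_op_subspace A d.
split=> [[D' [presD' [_ ltD]]] g | W_invD].
- have [_ conjD'] := (preserves_inv_W_inv D').1 presD'.
  apply: (op_subspace_ext subsp (op_subspaceB subsp (conj_op_ord_lt g ltD) ltD)) => x.
  rewrite /fsub /conj_op actB -/(conj_op act g D' x) conjD'.
  by rewrite opprB addrA subrK.
- exists (reynolds D); split; first exact/preserves_inv_W_inv/(reynolds_W_inv ordD).
  split; first exact: reynolds_ord_le.
  apply: (op_subspace_ext subsp (op_subspaceZ subsp _ (op_subspace_sum subsp _ W_invD))).
  by move=> x; rewrite fsub_reynolds.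
Qed.

End Domain.

End Action.

Theorem theorem3p1 (R : realType) (A : comAlgType (Cx R))
  (HA_fg : fin_gen_alg A) (HA_dom : is_domain A)
  (gT : finGroupType) (act : gT -> A -> A) (Hact : alg_action act) :
  (forall D : A -> A, preserves_inv act D <-> W_inv_op act D) /\
  (forall (d : nat) (D : A -> A), ord_le d D ->
     (gr_in_sub act d D <-> gr_W_inv act d D)).
Proof.
have charW : (#|gT|%:R : Cx R) != 0.
  by rewrite pnatr_eq0 -lt0n; apply/card_gt0P; exists 1%g.
split=> [D | d D]; first exact: preserves_inv_W_inv.
exact: gr_in_sub_W_inv.
Qed.
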